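(* Let $G$ be a $6$-regular graph, $\mathcal S$ a canonical path partition of $G$, and $P$ a path component with end-vertices $o_1,o_2$. Let $x_1,x_2\in V_2$ be path neighbors on $P$, with $x_1$ immediately preceding $x_2$ when $P$ is traversed from $o_1$ to $o_2$, and suppose neither $x_1$ nor $x_2$ is joined by a free edge to a dangerous vertex. If $b(\{x_1\})+b(\{x_2\})>\frac73$, then $x_1$ goes to $o_1$ and $x_2$ goes to $o_2$.
   Context: All graphs are finite, simple and undirected. A path partition of $G=(V,E)$ is a set of vertex-disjoint paths (single vertices allowed) covering $V$; its members are components. A component with $t\ge3$ vertices is a cycle component if the subgraph induced on its vertex set has a spanning cycle; a one-vertex component is an isolated vertex; every other component is a path component. A path partition is canonical if (1) it has the minimum number of components among all path partitions of $G$; (2) among those, it has the maximum number of cycle components; (3) it has no isolated vertices. Given a canonical path partition $\mathcal S$ of $G$: two vertices are path neighbors if they are consecutive on a path component. An edge of $G$ is a free edge unless it joins two path neighbors or has both endpoints in the same cycle component. $V_1$ is the set of end-vertices of path components together with all vertices of cycle components. The remaining vertices are classified by the first applicable rule: $V_2$: joined by a free edge to a vertex of $V_1$; $V_3$: both path neighbors lie in $V_2$; $V_4$: exactly one path neighbor lies in $V_2$; $V_5$: all others. A balanced edge is a free edge with one endpoint in $V_1$ and the other in $V_2$; for $x\in V_2$, $y\in V_1$ we say $x$ goes to $y$ if $xy$ is a balanced edge. A vertex of $V_2$ is moderate if it is incident to at least two balanced edges, at least one of whose other endpoints is an end-vertex of a path component; it is heavy if it is incident to at least three balanced edges whose other endpoints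 are end-vertices of path components. A vertex of $V_3$ is dangerous if one of its path neighbors is heavy and the other is moderate. For $Y\subseteq V_2$, $b(Y)$ is the sum, over all balanced edges $xy$ with $x\in Y$ and $y\in V_1$, of $2/3$ if $y$ is an end-vertex of a path component, $1/|V(C)|$ if $y$ lies in a cycle component $C$ with $|V(C)|\le 6$, and $0$ if $y$ lies in a cycle component with at least $7$ vertices. *)

From HB Require Import structures.
From mathcomp Require Import all_boot all_order all_algebra.
Set Implicit Arguments. Unset Strict Implicit. Unset Printing Implicit Defensive.
Import Order.TTheory GRing.Theory Num.Theory.

(* A simple graph on a finite vertex type T is a symmetric irreflexive
   relation e : rel T. *)

Section PathPartitions.
Variables (T : finType) (e : rel T).

Definition gpath (p : seq T) : bool :=
  if p is x :: q then path e x q else false.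

Definition path_partition (S : seq (seq T)) : Prop :=
  [/\ all gpath S, uniq (flatten S) & forall v : T, v \in flatten S].

(* t >= 3 vertices and the induced subgraph has a spanning cycle, i.e.
   some cyclic ordering of the vertex set of p is an e-cycle. *)
Definition is_cycle_comp (p : seq T) : bool :=
  (3 <= size p) && has (cycle e) (permutations p).

Definition is_isolated_comp (p : seq T) : bool := size p == 1.

Definition is_path_comp (p : seq T) : bool :=
  (2 <= size p) && ~~ is_cycle_comp p.

Definition ncycles (S : seq (seq T)) : nat := count is_cycle_comp S.

Definition canonical_pp (S : seq (seq T)) : Prop :=
  [/\ path_partition S,
      (forall S', path_partition S' -> size S <= size S'),
      (forall S', path_partition S' -> size S' = size S ->
                  ncycles S' <= ncycles S)
    & all (fun p => ~~ is_isolated_comp p) S].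

Variable S : seq (seq T).

Definition comp_of (v : T) : seq T := nth [::] S (find (fun p => v \in p) S).

Definition path_nb (u v : T) : bool :=
  has (fun p => is_path_comp p &&
         (((u, v) \in zip p (behead p)) || ((v, u) \in zip p (behead p)))) S.

Definition same_cycle (u v : T) : bool :=
  has (fun p => [&& is_cycle_comp p, u \in p & v \in p]) S.

Definition free_edge (u v : T) : bool :=
  [&& e u v, ~~ path_nb u v & ~~ same_cycle u v].

Definition end_vertex (v : T) : bool :=
  has (fun p => is_path_comp p && ((v == head v p) || (v == last v p))) S.

Definition in_cycle (v : T) : bool := has (fun p => is_cycle_comp p && (v \in p)) S.

Definition V1 (v : T) : bool := end_vertex v || in_cycle v.

Definition V2 (v : T) : bool := ~~ V1 v && [exists y, V1 y && free_edge v y].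

Definition V3 (v : T) : bool :=
  [&& ~~ V1 v, ~~ V2 v & [forall y, path_nb v y ==> V2 y]].

Definition goes_to (x y : T) : bool := [&& V2 x, V1 y & free_edge x y].

Definition moderate (x : T) : bool :=
  [&& V2 x, 2 <= #|[set y | goes_to x y]|
          & 1 <= #|[set y | goes_to x y && end_vertex y]| ].

Definition heavy (x : T) : bool :=
  V2 x && (3 <= #|[set y | goes_to x y && end_vertex y]|).

Definition dangerous (v : T) : bool :=
  V3 v && [exists y1, exists y2,
     [&& y1 != y2, path_nb v y1, path_nb v y2, heavy y1 & moderate y2]].

Local Open Scope ring_scope.

Definition bweight (y : T) : rat :=
  if end_vertex y then 2 / 3
  else if (size (comp_of y) <= 6)%N then ((size (comp_of y))%:R)^-1
  else 0.

Definition bval (Y : {set T}) : rat :=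
  \sum_(x in Y) \sum_(y | goes_to x y) bweight y.

End PathPartitions.

(* Every balanced edge at x1 or x2 ends at o1, o2, an end-vertex of another
   path component, or a vertex of a cycle component.  Rerouting the canonical
   partition along two such edges (attaching the two halves of P to other
   components, or closing part of P into a cycle) would decrease the number of
   components or increase the number of cycle components; this rules out all
   but a few combinations of targets.  In the remaining ones the weights are
   bounded directly: an end-vertex weighs 2/3, a vertex of a cycle C at most
   1/|C| <= 1/3, each of x1, x2 has at most 6 - 2 = 4 balanced edges, and
   together they send at most |C| balanced edges into a cycle C.  The total is
   then at most 7/3 unless x1 goes to o1 and x2 goes to o2. *)

From HB Require Import structures.
From mathcomp Require Import all_boot all_order all_algebra.
From mathcomp Require Import ring lra zify.
Import Order.TTheory GRing.Theory Num.Theory.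
Set Implicit Arguments. Unset Strict Implicit. Unset Printing Implicit Defensive.

Section SeqFacts.
Variable T : eqType.

Lemma rev_cons_last (x : T) s : rev (x :: s) = last x s :: rev (belast x s).
Proof. by rewrite lastI rev_rcons. Qed.

Lemma head_rev (x : T) s : head x (rev s) = last x s.
Proof. by case: s => //= y s; rewrite rev_cons_last. Qed.

Lemma last_rev (x : T) s : last x (rev s) = head x s.
Proof. by case: s => //= y s; rewrite rev_cons last_rcons. Qed.

Lemma rev_cat_cons2 (L R : seq T) u v :
  rev (L ++ u :: v :: R) = rev R ++ v :: u :: rev L.
Proof. by rewrite rev_cat !rev_cons -!cats1 -!catA. Qed.

Lemma mem_zip_behead (L R : seq T) u v :
  (u, v) \in zip (L ++ u :: v :: R) (behead (L ++ u :: v :: R)).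
Proof.
elim: L => [|h L IH] /=; first by rewrite mem_head.
by move: IH; case: (L ++ u :: v :: R) => [|y X] //= IH; rewrite inE IH orbT.
Qed.

Lemma mem_flatten_uniq (S : seq (seq T)) p q y : uniq (flatten S) ->
  p \in S -> q \in S -> y \in p -> y \in q -> p = q.
Proof.
elim: S => //= c S IH; rewrite cat_uniq => /and3P[_ dis uS].
have notin r : r \in S -> y \in c -> y \in r -> False.
  move=> rS yc yr; move/negP: dis; apply; apply/hasP; exists y => //.
  by apply/flattenP; exists r.
rewrite !inE => /orP[/eqP->|pS] /orP[/eqP->|qS] yp yq //.
- by case: (notin q).
- by case: (notin p).
- exact: IH.
Qed.

Lemma uniq_flatten_mem (S : seq (seq T)) p : uniq (flatten S) -> p \in S -> uniq p.
Proof.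
elim: S => //= c S IH; rewrite cat_uniq => /and3P[uc _ uS].
by rewrite inE => /orP[/eqP->|pS] //; apply: IH.
Qed.

Lemma perm_cat_subset (S R : seq T) : uniq S -> uniq R -> {subset R <= S} ->
  exists S0, perm_eq S (R ++ S0).
Proof.
move=> uS uR sRS; exists (filter (predC (mem R)) S).
rewrite -(perm_filterC (mem R) S) perm_cat2r.
apply: uniq_perm; rewrite ?filter_uniq // => x.
by rewrite mem_filter; apply/andb_idr/sRS.
Qed.

End SeqFacts.

Section GraphPaths.
Variables (T : finType) (e : rel T).
Hypothesis e_sym : symmetric e.

Lemma gpath_rev p : gpath e (rev p) = gpath e p.
Proof.
case: p => [//|x s]; rewrite rev_cons_last /= rev_path.
by apply: eq_path => u v; rewrite e_sym.
Qed.

Lemma gpath_cat p q d : p != [::] -> q != [::] ->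
  gpath e (p ++ q) = [&& gpath e p, gpath e q & e (last d p) (head d q)].
Proof.
case: p => // x p; case: q => // y q _ _ /=; rewrite cat_path /=.
by case: (path e x p); case: (e _ y); case: (path e y q).
Qed.

Lemma is_cycle_comp_perm p q : perm_eq p q -> is_cycle_comp e p = is_cycle_comp e q.
Proof.
wlog suff: p q / perm_eq p q -> is_cycle_comp e p -> is_cycle_comp e q.
  by move=> H pq; apply/idP/idP; apply: H; rewrite // perm_sym.
move=> pq /andP[sz /hasP[t tp ct]]; rewrite /is_cycle_comp -(perm_size pq) sz.
by apply/hasP; exists t; rewrite // mem_permutations (perm_trans _ pq) -?mem_permutations.
Qed.

Lemma gpath_closed_is_cycle_comp o p : 1 < size p -> path e o p -> e (last o p) o ->
  is_cycle_comp e (o :: p).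
Proof.
move=> sz gp eo; rewrite /is_cycle_comp /= ltnS sz; apply/hasP; exists (o :: p).
  by rewrite mem_permutations.
by rewrite /= rcons_path gp.
Qed.

Definition spanning_path (K p : seq T) := gpath e p && perm_eq p K.

End GraphPaths.

Section Exchange.
Variables (T : finType) (e : rel T).

Lemma path_partition_perm S1 S2 :
  perm_eq S1 S2 -> path_partition e S1 -> path_partition e S2.
Proof.
move=> S12 [gS uS cS]; split.
- by rewrite -(perm_all _ S12).
- by rewrite -(perm_uniq (perm_flatten S12)).
- by move=> v; rewrite -(perm_mem (perm_flatten S12)).
Qed.

Lemma path_partition_exchange S0 R N : path_partition e (R ++ S0) ->
  all (gpath e) N -> perm_eq (flatten N) (flatten R) -> path_partition e (N ++ S0).
Proof.
move=> [gS uS cS] gN NR.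
have NS : perm_eq (flatten (N ++ S0)) (flatten (R ++ S0)).
  by rewrite !flatten_cat perm_cat2r.
split.
- by move: gS; rewrite !all_cat gN => /andP[].
- by rewrite (perm_uniq NS).
- by move=> v; rewrite (perm_mem NS).
Qed.

Variable S : seq (seq T).
Hypothesis S_can : canonical_pp e S.

Lemma canonical_gpath p : p \in S -> gpath e p.
Proof. by case: S_can => -[/allP gS _ _] _ _ _; apply: gS. Qed.

Lemma canonical_uniq_flatten : uniq (flatten S).
Proof. by case: S_can => -[]. Qed.

Lemma canonical_uniq : uniq S.
Proof.
case: S_can => -[+ + _] _ _ _; elim: S => //= c S' IH /andP[gc gS].
rewrite cat_uniq => /and3P[_ dis uS]; rewrite IH // andbT.
apply: contra dis => cS'; case: c gc cS' => // y c _ cS'.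
apply/hasP; exists y; last exact: mem_head.
by apply/flattenP; exists (y :: c); rewrite ?mem_head.
Qed.

Lemma canonical_comp_uniq p : p \in S -> uniq p.
Proof. exact: uniq_flatten_mem canonical_uniq_flatten. Qed.

Lemma canonical_comp_eq p q y : p \in S -> q \in S -> y \in p -> y \in q -> p = q.
Proof. exact: mem_flatten_uniq canonical_uniq_flatten. Qed.

Section Replace.
Variables R N : seq (seq T).
Hypotheses (R_uniq : uniq R) (R_sub : {subset R <= S}).
Hypotheses (N_gpath : all (gpath e) N) (N_perm : perm_eq (flatten N) (flatten R)).

Lemma exchange_size : size R <= size N.
Proof.
case: S_can => pS minS _ _.
have [S0 SR] := perm_cat_subset canonical_uniq R_uniq R_sub.
have := minS _ (path_partition_exchange (path_partition_perm SR pS) N_gpath N_perm).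
by rewrite (perm_size SR) !size_cat leq_add2r.
Qed.

Lemma exchange_ncycles : size N = size R ->
  count (is_cycle_comp e) N <= count (is_cycle_comp e) R.
Proof.
case: S_can => pS _ maxS _ NR.
have [S0 SR] := perm_cat_subset canonical_uniq R_uniq R_sub.
have := maxS _ (path_partition_exchange (path_partition_perm SR pS) N_gpath N_perm).
rewrite (perm_size SR) !size_cat NR => /(_ erefl).
by rewrite /ncycles (permP SR) !count_cat leq_add2r.
Qed.

End Replace.
End Exchange.

Section SpanningPaths.
Variables (T : finType) (e : rel T).
Hypothesis e_sym : symmetric e.

Lemma mem_end (p : seq T) y : p != [::] ->
  (y == head y p) || (y == last y p) -> y \in p.
Proof. by case: p => // z p _ /orP[] /eqP /= ->; rewrite ?mem_head ?mem_last. Qed.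

Lemma end_spanning_path p y : gpath e p -> (y == head y p) || (y == last y p) ->
  exists s, spanning_path e p (y :: s).
Proof.
case: p => // z p gp /orP[] /eqP /= ->; first by exists p; rewrite /spanning_path gp perm_refl.
exists (rev (belast z p)); rewrite /spanning_path -rev_cons_last gpath_rev //.
by rewrite gp perm_rev perm_refl.
Qed.

Lemma ends_spanning_path p y z : gpath e p -> (y == head y p) || (y == last y p) ->
  (z == head z p) || (z == last z p) -> y != z ->
  exists s, spanning_path e p (y :: s) /\ last y s = z.
Proof.
case: p => // w p gp /= /orP[] /eqP-> /orP[] /eqP-> //; rewrite ?eqxx // => _.
  by exists p; rewrite /spanning_path gp perm_refl.
exists (rev (belast w p)); rewrite /spanning_path -rev_cons_last gpath_rev //.
rewrite gp perm_rev perm_refl; split => //.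
by have := last_rev w (w :: p); rewrite rev_cons_last.
Qed.

Lemma rot_index_cons (t : seq T) y : y \in t -> exists s, rot (index y t) t = y :: s.
Proof.
by move=> yt; rewrite /rot (drop_nth y) ?index_mem // nth_index //; eexists.
Qed.

Lemma cycle_spanning_path C y : is_cycle_comp e C -> y \in C ->
  exists s, spanning_path e C (y :: s).
Proof.
move=> /andP[_ /hasP[t]]; rewrite mem_permutations => tC ct yC.
have [s ts] : exists s, rot (index y t) t = y :: s.
  by apply: rot_index_cons; rewrite (perm_mem tC).
exists s; rewrite /spanning_path -ts perm_rot tC andbT.
by move: ct; rewrite -(rot_cycle (index y t)) ts /= rcons_path => /andP[].
Qed.

(* [next t d] and [d] are the two ends of the spanning path obtained by
   deleting the edge [d -- next t d] of the Hamiltonian cycle [t]. *)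
Lemma cycle_next_spanning_path C : is_cycle_comp e C -> uniq C ->
  exists2 t, perm_eq t C /\ uniq t & forall d, d \in t ->
    exists s, spanning_path e C (next t d :: s) /\ last (next t d) s = d.
Proof.
move=> /andP[sz /hasP[t]]; rewrite mem_permutations => tC ct uC.
have ut : uniq t by rewrite (perm_uniq tC).
exists t => // d dt; have [s ts] := rot_index_cons dt.
have : 2 < size (d :: s) by rewrite -ts size_rot (perm_size tC).
case: s ts => // c s ts _.
have -> : next t d = c by rewrite -(next_rot (index d t) ut) ts /= eqxx.
exists (rcons s d); rewrite last_rcons; split => //.
rewrite /spanning_path; apply/andP; split.
  by move: ct; rewrite -(rot_cycle (index d t)) ts /= rcons_path => /andP[].
apply: perm_trans tC; apply: (@perm_trans _ (rot (index d t) t)).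
  by rewrite ts -rcons_cons perm_rcons perm_refl.
by rewrite perm_rot perm_refl.
Qed.

End SpanningPaths.

Section Weights.
Variables (T : finType) (e : rel T) (S : seq (seq T)).
Hypothesis S_can : canonical_pp e S.

Lemma comp_ofE p y : p \in S -> y \in p -> comp_of S y = p.
Proof.
move=> pS yp; have yS : has (fun p => y \in p) S by apply/hasP; exists p.
apply: (canonical_comp_eq S_can _ pS (nth_find [::] yS) yp).
by apply: mem_nth; rewrite -has_find.
Qed.

Lemma end_vertex_not_in_cycle y : end_vertex e S y -> ~~ in_cycle e S y.
Proof.
case/hasP => p pS /andP[/andP[sz pnc] yp]; apply/hasP => -[C CS /andP[cC yC]].
have pn : p != [::] by case: p {pS pnc yp} sz.
by move: pnc; rewrite (canonical_comp_eq S_can pS CS (mem_end pn yp) yC) cC.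
Qed.

Local Open Scope ring_scope.

Lemma bweight_end y : end_vertex e S y -> bweight e S y = 2 / 3.
Proof. by rewrite /bweight => ->. Qed.

Lemma bweight_cycle C y : C \in S -> is_cycle_comp e C -> y \in C ->
  [/\ 0 <= bweight e S y, bweight e S y <= (size C)%:R^-1 & bweight e S y <= 1 / 3].
Proof.
move=> CS cC yC.
have /negbTE yNend : ~~ end_vertex e S y.
  by apply: contraL (@end_vertex_not_in_cycle y) _; apply/hasP; exists C; rewrite ?cC.
have sz : (3 <= size C)%N by case/andP: cC.
have C_inv : (size C)%:R^-1 <= 1 / 3 :> rat.
  by rewrite mul1r lef_pV2 ?ler_nat ?posrE ?ltr0n // (leq_trans _ sz).
rewrite /bweight yNend (comp_ofE CS yC).
by case: ifP => _; split; rewrite ?invr_ge0 ?ler0n //; lra.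
Qed.

Lemma bweight_V1 y : V1 e S y -> 0 <= bweight e S y <= 2 / 3.
Proof.
case/orP => [/bweight_end->|/hasP[C CS /andP[cC yC]]]; first by apply/andP; lra.
by have [? _ ?] := bweight_cycle CS cC yC; apply/andP; lra.
Qed.

End Weights.

Section Counting.
Variable T : finType.

Lemma card_set_and_eq1 (P : pred T) o : #|[set y | P y && (y == o)]| = P o.
Proof.
have sP : [set y | P y && (y == o)] = if P o then [set o] else set0.
  apply/setP => y; case: (eqVneq y o) => [->|yo]; case Po: (P o);
  by rewrite !inE ?Po ?(negbTE yo) ?andbF ?eqxx.
by rewrite sP; case: (P o); rewrite ?cards0 ?cards1.
Qed.

Local Open Scope ring_scope.

Lemma sum_nat_indicator (R : nzSemiRingType) (P Q : pred T) :
  \sum_(y | P y) (Q y)%:R = #|[set y | P y && Q y]|%:R :> R.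
Proof.
rewrite -sum1dep_card natr_sum big_mkcondr /=.
by apply: eq_bigr => y _; case: (Q y).
Qed.

Lemma sum_one_card (R : nzSemiRingType) (P : pred T) :
  \sum_(y | P y) 1 = #|[set y | P y]|%:R :> R.
Proof. by rewrite -sum1dep_card natr_sum. Qed.

End Counting.

Section BalancedSums.
Variables (T : finType) (e : rel T) (S : seq (seq T)).
Hypothesis S_can : canonical_pp e S.

Lemma goes_to_edge x y : goes_to e S x y -> e x y.
Proof. by case/and3P => _ _ /and3P[]. Qed.

Lemma goes_to_V1 x y : goes_to e S x y -> V1 e S y.
Proof. by case/and3P. Qed.

Lemma V2_goes_to x : V2 e S x -> exists y, goes_to e S x y.
Proof.
by move=> x2; case/andP: (x2) => _ /existsP[y /andP[y1 fy]]; exists y; apply/and3P.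
Qed.

(* The two path neighbours of [x] are joined to it by non-free edges. *)
Lemma card_goes_to_le x u v : u != v -> e x u -> e x v ->
  path_nb e S x u -> path_nb e S x v ->
  #|[set y | goes_to e S x y]| <= #|[set w | e x w]| - 2.
Proof.
move=> uv xu xv xu_nb xv_nb.
have sub : [set y | goes_to e S x y] \subset [set w | e x w] :\: [set u; v].
  apply/subsetP => y; rewrite !inE => /and3P[_ _ /and3P[xy /negP xyNnb _]].
  by rewrite xy andbT; apply/negP => /orP[] /eqP ey; apply: xyNnb; rewrite ey.
apply: (leq_trans (subset_leq_card sub)).
rewrite cardsD (setIidPr _) ?cards2 ?uv //.
by apply/subsetP => y; rewrite !inE => /orP[] /eqP->.
Qed.

Local Open Scope ring_scope.

Definition bsum x := \sum_(y | goes_to e S x y) bweight e S y.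

Lemma bval_set1 x : bval e S [set x] = bsum x.
Proof. by rewrite /bval big_set1. Qed.

Lemma bsum_le_single x z : (forall y, goes_to e S x y -> y = z) -> bsum x <= 2 / 3.
Proof.
move=> xz; apply: (@le_trans _ _ (\sum_(y | goes_to e S x y) 2 / 3 * (y == z)%:R)).
  apply: ler_sum => y xy; rewrite -(xz _ xy) eqxx mulr1n mulr1.
  by have /andP[_] := bweight_V1 S_can (goes_to_V1 xy).
rewrite -mulr_sumr sum_nat_indicator card_set_and_eq1.
by case: (goes_to e S x z); rewrite ?mulr1 ?mulr0; lra.
Qed.

Lemma bsum_le_end_cycles x o : (#|[set y | goes_to e S x y]| <= 4)%N ->
  (forall y, goes_to e S x y -> y = o \/ in_cycle e S y) -> bsum x <= 5 / 3.
Proof.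
move=> x4 xo; apply: (@le_trans _ _
  (\sum_(y | goes_to e S x y) 1 / 3 * (1 + (y == o)%:R))).
  apply: ler_sum => y xy; case: (xo _ xy) => [<-|/hasP[C CS /andP[cC yC]]].
    by rewrite eqxx mulr1n; have /andP[_] := bweight_V1 S_can (goes_to_V1 xy); lra.
  have [_ _ y3] := bweight_cycle S_can CS cC yC.
  have : 0 <= (y == o)%:R :> rat by rewrite ler0n.
  lra.
rewrite -mulr_sumr big_split /= sum_one_card sum_nat_indicator card_set_and_eq1.
have : #|[set y | goes_to e S x y]|%:R <= 4 :> rat by rewrite ler_nat.
by case: (goes_to e S x o) => /=; lra.
Qed.

Lemma bsum_le_end_comp x o C : C \in S -> is_cycle_comp e C ->
  (forall y, goes_to e S x y -> y = o \/ y \in C) ->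
  bsum x <= 2 / 3 * (goes_to e S x o)%:R +
            (size C)%:R^-1 * #|[set y | goes_to e S x y && (y \in C)]|%:R.
Proof.
move=> CS cC xo; apply: (@le_trans _ _ (\sum_(y | goes_to e S x y)
    (2 / 3 * (y == o)%:R + (size C)%:R^-1 * (y \in C)%:R))).
  apply: ler_sum => y xy.
  have C_ge0 : 0 <= (size C)%:R^-1 * (y \in C)%:R :> rat by rewrite mulr_ge0 ?invr_ge0.
  case: (xo _ xy) => [<-|yC].
    by rewrite eqxx mulr1n mulr1; have /andP[_] := bweight_V1 S_can (goes_to_V1 xy); lra.
  have [_ yCinv _] := bweight_cycle S_can CS cC yC.
  have : 0 <= 2 / 3 * (y == o)%:R :> rat by rewrite mulr_ge0.
  by rewrite yC mulr1; lra.
by rewrite big_split /= -!mulr_sumr !sum_nat_indicator card_set_and_eq1.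
Qed.

Lemma bsum_pair_le_comp x x' o o' C : C \in S -> is_cycle_comp e C ->
  (forall y, goes_to e S x y -> y = o \/ y \in C) ->
  (forall y, goes_to e S x' y -> y = o' \/ y \in C) ->
  ~~ (goes_to e S x o && goes_to e S x' o') ->
  (#|[set y | goes_to e S x y && (y \in C)]| +
   #|[set y | goes_to e S x' y && (y \in C)]| <= size C)%N ->
  bsum x + bsum x' <= 5 / 3.
Proof.
move=> CS cC xo x'o' not_both cardC.
have := bsum_le_end_comp CS cC xo; have := bsum_le_end_comp CS cC x'o'.
move: not_both cardC; set n := #|_|; set n' := #|_| => not_both cardC.
have C_pos : (0 < size C)%N by case/andP: cC => /(leq_trans _)->.
have nC : n%:R * (size C)%:R^-1 + n'%:R * (size C)%:R^-1 <= 1 :> rat.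
  by rewrite -mulrDl -natrD ler_pdivrMr ?ltr0n // mul1r ler_nat.
move: not_both; case: (goes_to e S x o); case: (goes_to e S x' o') => //= _.
all: by rewrite ![_^-1 * _]mulrC; lra.
Qed.

End BalancedSums.

Section PathExchange.
Variables (T : finType) (e : rel T).
Hypothesis e_sym : symmetric e.
Hypothesis e_irr : irreflexive e.
Variable S : seq (seq T).
Hypothesis S_can : canonical_pp e S.
Variables (P a b : seq T) (x1 x2 : T).
Hypothesis HP : (P \in S) || (rev P \in S).
Hypothesis HPpath : is_path_comp e P.
Hypothesis HPdef : P = a ++ x1 :: x2 :: b.

Definition Pcomp := if P \in S then P else rev P.

Lemma Pcomp_mem : Pcomp \in S.
Proof. by rewrite /Pcomp; case: ifP => // PS; move: HP; rewrite PS. Qed.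

Lemma perm_Pcomp : perm_eq Pcomp P.
Proof. by rewrite /Pcomp; case: ifP => _; rewrite ?perm_rev perm_refl. Qed.

Lemma Pcomp_path_comp : is_path_comp e Pcomp.
Proof.
by move: HPpath; rewrite /is_path_comp (perm_size perm_Pcomp) (is_cycle_comp_perm e perm_Pcomp).
Qed.

Lemma gpath_P : gpath e P.
Proof.
by have := canonical_gpath S_can Pcomp_mem; rewrite /Pcomp; case: ifP; rewrite ?gpath_rev.
Qed.

Lemma uniq_P : uniq P.
Proof. by rewrite -(perm_uniq perm_Pcomp) (canonical_comp_uniq S_can Pcomp_mem). Qed.

Lemma gpath_P_split : [/\ gpath e (a ++ [:: x1]), path e x2 b & e x1 x2].
Proof.
have := gpath_P; rewrite HPdef -cat_rcons -cats1 (gpath_cat _ x1) //; last by case: a.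
by rewrite cats1 last_rcons => /and3P[].
Qed.

Lemma path_nb_P L R u v : P = L ++ u :: v :: R -> path_nb e S u v /\ path_nb e S v u.
Proof.
move=> PLR; suff uv : path_nb e S u v.
  by split=> //; apply: sub_has uv => p /andP[-> /=]; rewrite orbC.
apply/hasP; exists Pcomp; rewrite ?Pcomp_mem // Pcomp_path_comp /= /Pcomp.
by case: ifP => _; rewrite PLR ?rev_cat_cons2 mem_zip_behead ?orbT.
Qed.

Lemma comp_neq_Pcomp (K : seq T) y : y \in K -> y \notin P -> K != Pcomp.
Proof. by move=> yK; apply: contra => /eqP KP; rewrite -(perm_mem perm_Pcomp) -KP. Qed.

Lemma spanning_path_head K y s : spanning_path e K (y :: s) -> y \in K.
Proof. by case/andP => _ /perm_mem <-; rewrite mem_head. Qed.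

Lemma no_edges_to_two_comps K1 K2 y z s1 s2 : K1 \in S -> K2 \in S -> K1 != K2 ->
  y \notin P -> z \notin P -> spanning_path e K1 (y :: s1) ->
  spanning_path e K2 (z :: s2) -> e x1 y -> e z x2 -> False.
Proof.
move=> K1S K2S K12 yP zP sp1 sp2 x1y zx2.
have K1P := comp_neq_Pcomp (spanning_path_head sp1) yP.
have K2P := comp_neq_Pcomp (spanning_path_head sp2) zP.
case/andP: sp1 => /= g1 /permP c1; case/andP: sp2 => /= g2 /permP c2.
have [ga gb _] := gpath_P_split.
suff : 3 <= 2 by [].
apply: (exchange_size S_can (R := [:: Pcomp; K1; K2])
  (N := [:: a ++ x1 :: y :: s1; rev (z :: s2) ++ x2 :: b])).
- by rewrite /= !inE !negb_or ![Pcomp == _]eq_sym K1P K2P K12.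
- by move=> q; rewrite !inE => /or3P[] /eqP->; rewrite ?Pcomp_mem.
- have rzn : rev (z :: s2) != [::] by rewrite -size_eq0 size_rev.
  have an : rcons a x1 != [::] by rewrite -size_eq0 size_rcons.
  rewrite /= andbT -cat_rcons (gpath_cat _ x1 (p := rcons a x1)) //.
  rewrite (gpath_cat _ x1 (p := rev (z :: s2))) // -cats1 ga gpath_rev //.
  by rewrite /= cats1 last_rcons last_rev g1 g2 gb x1y zx2.
- apply/permP => q; rewrite /= !cats0 !count_cat (permP perm_Pcomp) -c1 -c2 HPdef.
  by rewrite /= !count_cat count_rev /=; ring.
Qed.

Lemma no_bridge_through_comp K y s : K \in S -> y \notin P ->
  spanning_path e K (y :: s) -> e x1 y -> e (last y s) x2 -> False.
Proof.
move=> KS yP sp x1y yx2; have KP := comp_neq_Pcomp (spanning_path_head sp) yP.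
case/andP: sp => /= g /permP c; have [ga gb _] := gpath_P_split.
suff : 2 <= 1 by [].
apply: (exchange_size S_can (R := [:: Pcomp; K]) (N := [:: a ++ x1 :: (y :: s) ++ x2 :: b])).
- by rewrite /= inE eq_sym KP.
- by move=> q; rewrite !inE => /orP[] /eqP->; rewrite ?Pcomp_mem.
- have an : rcons a x1 != [::] by rewrite -size_eq0 size_rcons.
  rewrite /= andbT -cat_rcons (gpath_cat _ x1 (p := rcons a x1)) //.
  rewrite (gpath_cat _ x1 (p := y :: s)) // -cats1 ga.
  by rewrite /= cats1 last_rcons g gb x1y yx2.
- apply/permP => q; rewrite /= !cats0 !count_cat (permP perm_Pcomp) -c HPdef.
  by rewrite /= !count_cat /=; ring.
Qed.

Lemma no_edges_o2_and_out K y s : K \in S -> y \notin P ->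
  spanning_path e K (y :: s) -> e x1 (last x2 b) -> e x2 y -> False.
Proof.
move=> KS yP sp x1o2 x2y; have KP := comp_neq_Pcomp (spanning_path_head sp) yP.
case/andP: sp => /= g /permP c; have [ga gb _] := gpath_P_split.
suff : 2 <= 1 by [].
apply: (exchange_size S_can (R := [:: Pcomp; K]) (N := [:: a ++ x1 :: rev (x2 :: b) ++ y :: s])).
- by rewrite /= inE eq_sym KP.
- by move=> q; rewrite !inE => /orP[] /eqP->; rewrite ?Pcomp_mem.
- have an : rcons a x1 != [::] by rewrite -size_eq0 size_rcons.
  have bn : rev (x2 :: b) != [::] by rewrite -size_eq0 size_rev.
  rewrite /= andbT -cat_rcons (gpath_cat _ x1 (p := rcons a x1)) ?(gpath_cat _ x1 (p := rev _)) //.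
    rewrite -cats1 ga gpath_rev //= cats1 last_rcons last_rev g gb x2y.
    by rewrite rev_cons_last /= x1o2.
  by case: (rev _).
- apply/permP => q; rewrite /= !cats0 !count_cat (permP perm_Pcomp) -c HPdef.
  by rewrite /= !count_cat count_rev /=; ring.
Qed.

Lemma no_cycle_o1_and_out K z s : K \in S -> ~~ is_cycle_comp e K -> z \notin P ->
  spanning_path e K (z :: s) -> 1 < size a -> e x1 (head x1 a) -> e z x2 -> False.
Proof.
move=> KS Knc zP sp a2 x1o1 zx2; have KP := comp_neq_Pcomp (spanning_path_head sp) zP.
case/andP: sp => /= g /permP c; have [ga gb _] := gpath_P_split.
have ac : is_cycle_comp e (a ++ [:: x1]).
  case: a a2 ga x1o1 => [//|o a'] /= a2 ga o1x1.
  apply: gpath_closed_is_cycle_comp => //; first by rewrite size_cat addn1.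
  by rewrite last_cat.
suff : 1 <= 0 by [].
have := exchange_ncycles S_can (R := [:: Pcomp; K])
  (N := [:: a ++ [:: x1]; rev (z :: s) ++ x2 :: b]).
rewrite /= ac (negbTE Knc) (negbTE (proj2 (andP Pcomp_path_comp))); apply=> //.
- by rewrite inE eq_sym KP.
- by move=> q; rewrite !inE => /orP[] /eqP->; rewrite ?Pcomp_mem.
- have zn : rev (z :: s) != [::] by rewrite -size_eq0 size_rev.
  by rewrite ga (gpath_cat _ x1) ?gpath_rev //= g gb last_rev zx2.
- apply/permP => q; rewrite /= !cats0 !count_cat (permP perm_Pcomp) -c HPdef.
  by rewrite /= !count_cat count_rev /=; ring.
Qed.

Lemma no_edges_o2_o1 : a != [::] -> e x1 (last x2 b) -> e x2 (head x1 a) -> False.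
Proof.
move=> an x1o2 x2o1; have [ga gb _] := gpath_P_split.
have gC : gpath e (a ++ x1 :: rev (x2 :: b)).
  have an1 : rcons a x1 != [::] by rewrite -size_eq0 size_rcons.
  have bn : rev (x2 :: b) != [::] by rewrite -size_eq0 size_rev.
  rewrite -cat_rcons (gpath_cat _ x1) // -cats1 ga gpath_rev //= gb.
  by rewrite cats1 last_rcons rev_cons_last /= x1o2.
have Cc : is_cycle_comp e (a ++ x1 :: rev (x2 :: b)).
  case: a an gC x2o1 => [//|o a'] _ /= gC x2o1.
  apply: gpath_closed_is_cycle_comp => //; last by rewrite last_cat /= last_rev.
  by rewrite size_cat /= size_rev /=; lia.
suff : 1 <= 0 by [].
have := exchange_ncycles S_can (R := [:: Pcomp]) (N := [:: a ++ x1 :: rev (x2 :: b)]).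
rewrite /= Cc (negbTE (proj2 (andP Pcomp_path_comp))); apply=> //.
- by move=> q; rewrite inE => /eqP->; rewrite Pcomp_mem.
- by rewrite gC.
- apply/permP => q; rewrite /= !cats0 !count_cat (permP perm_Pcomp) HPdef.
  by rewrite /= !count_cat count_rev /=; ring.
Qed.

Lemma goes_to_head_size_a : goes_to e S x1 (head x1 P) -> 1 < size a.
Proof.
case/and3P => _ _ /and3P[x1o1 /negP x1o1Nnb _]; move: HPdef x1o1 x1o1Nnb.
case: a => [|o [|o' a']] //= PE; rewrite PE /= ?e_irr // => _ [].
exact: (path_nb_P (L := [::]) PE).2.
Qed.

Lemma card_goes_to_x1_le : a != [::] ->
  #|[set y | goes_to e S x1 y]| <= #|[set w | e x1 w]| - 2.
Proof.
have [ga _ x1x2] := gpath_P_split; have [x1x2nb _] := path_nb_P HPdef.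
case: a HPdef ga => [//|o a'] PE ga _.
have PE' : P = belast o a' ++ last o a' :: x1 :: x2 :: b.
  by rewrite PE (lastI o a') cat_rcons.
have [_ x1onb] := path_nb_P PE'.
have ox2 : last o a' != x2.
  move: uniq_P; rewrite PE' cat_uniq => /and3P[_ _] /= /andP[].
  by rewrite !inE negb_or => /andP[_ /norP[]].
apply: (card_goes_to_le ox2) => //.
by move: ga; rewrite cat_cons /= cat_path /= e_sym => /and3P[].
Qed.

Lemma end_vertex_ends_P y : (y == head y P) || (y == last y P) -> end_vertex e S y.
Proof.
move=> yP; apply/hasP; exists Pcomp; rewrite ?Pcomp_mem // Pcomp_path_comp /= /Pcomp.
by case: ifP => _; rewrite ?head_rev ?last_rev // orbC.
Qed.

Lemma rev_P_comp : (rev P \in S) || (rev (rev P) \in S).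
Proof. by rewrite revK orbC. Qed.

Lemma rev_P_path_comp : is_path_comp e (rev P).
Proof.
have revP : perm_eq (rev P) P by rewrite perm_rev perm_refl.
by move: HPpath; rewrite /is_path_comp size_rev (is_cycle_comp_perm e revP).
Qed.

Lemma rev_P_split : rev P = rev b ++ x2 :: x1 :: rev a.
Proof. by rewrite HPdef rev_cat_cons2. Qed.

End PathExchange.

Section Targets.
Variables (T : finType) (e : rel T).
Hypotheses (e_sym : symmetric e) (e_irr : irreflexive e).
Variable S : seq (seq T).
Hypothesis S_can : canonical_pp e S.
Variables (P a b : seq T) (x1 x2 : T).
Hypothesis HP : (P \in S) || (rev P \in S).
Hypothesis HPpath : is_path_comp e P.
Hypothesis HPdef : P = a ++ x1 :: x2 :: b.
Hypotheses (Ha : a != [::]) (Hb : b != [::]).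
Hypothesis Hx2 : V2 e S x2.
Hypothesis e_reg : forall v, #|[set w | e v w]| = 6.

Let o1 := head x1 P.
Let o2 := last x1 P.

Definition outer_end y := end_vertex e S y && (y \notin P).

Lemma head_P : o1 = head x1 a.
Proof. by rewrite /o1 HPdef; case: a Ha. Qed.

Lemma last_P : o2 = last x2 b.
Proof. by rewrite /o2 HPdef last_cat. Qed.

Lemma in_cycle_notin_P y : in_cycle e S y -> y \notin P.
Proof.
case/hasP => C CS /andP[cC yC]; apply/negP => yP.
rewrite -(perm_mem (perm_Pcomp S P)) in yP.
have CP := canonical_comp_eq S_can CS (Pcomp_mem HP) yC yP.
by move: (Pcomp_path_comp S HPpath) => /andP[_]; rewrite -CP cC.
Qed.

Lemma outer_end_spanning_path y : outer_end y -> exists K s,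
  [/\ K \in S, ~~ is_cycle_comp e K, y \notin P & spanning_path e K (y :: s)].
Proof.
case/andP => /hasP[p pS /andP[/andP[_ pnc] yp]] yP.
by have [s sp] := end_spanning_path e_sym (canonical_gpath S_can pS) yp; exists p, s.
Qed.

Lemma in_cycle_spanning_path y : in_cycle e S y -> exists K s,
  [/\ K \in S, is_cycle_comp e K, y \notin P & spanning_path e K (y :: s)].
Proof.
move=> yc; have yP := in_cycle_notin_P yc; case/hasP: yc => C CS /andP[cC yC].
by have [s sp] := cycle_spanning_path cC yC; exists C, s.
Qed.

Lemma outside_spanning_path y : outer_end y || in_cycle e S y ->
  exists K s, [/\ K \in S, y \notin P & spanning_path e K (y :: s)].
Proof.
case/orP => [/outer_end_spanning_path|/in_cycle_spanning_path] [K [s [KS _ yP sp]]].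
  by exists K, s.
by exists K, s.
Qed.

Lemma balanced_target_cases x y : goes_to e S x y ->
  [\/ y = o1, y = o2, outer_end y | in_cycle e S y].
Proof.
move/goes_to_V1 => /orP[yend|]; last exact: Or44.
case yP: (y \in P); last by apply: Or43; rewrite /outer_end yend yP.
case/hasP: yend => p pS /andP[/andP[sz _] yp].
have pn : p != [::] by case: p {pS yp} sz.
rewrite -(perm_mem (perm_Pcomp S P)) in yP.
have pP := canonical_comp_eq S_can pS (Pcomp_mem HP) (mem_end pn yp) yP.
have [hP lP] : head y P = o1 /\ last y P = o2 by rewrite /o1 /o2 HPdef !last_cat; case: (a).
move: yp; rewrite pP /Pcomp; case: ifP => _; rewrite ?head_rev ?last_rev hP lP.
  by case/orP => /eqP; [apply: Or41 | apply: Or42].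
by case/orP => /eqP; [apply: Or42 | apply: Or41].
Qed.

Let rev_HP := rev_P_comp HP.
Let rev_HPpath := rev_P_path_comp HPpath.
Let rev_HPdef := rev_P_split HPdef.

Lemma outside_targets_same_comp y z K1 K2 s1 s2 :
  goes_to e S x1 y -> goes_to e S x2 z -> K1 \in S -> K2 \in S ->
  y \notin P -> z \notin P -> spanning_path e K1 (y :: s1) ->
  spanning_path e K2 (z :: s2) -> K1 = K2.
Proof.
move=> x1y x2z K1S K2S yP zP sp1 sp2; apply/eqP/negP => /negP K12.
have zx2 : e z x2 by rewrite e_sym (goes_to_edge x2z).
exact: (no_edges_to_two_comps e_sym S_can HP HPdef K1S K2S K12 yP zP sp1 sp2
  (goes_to_edge x1y) zx2).
Qed.

Lemma outer_ends_eq y z : goes_to e S x1 y -> goes_to e S x2 z ->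
  outer_end y -> outer_end z -> y = z.
Proof.
move=> x1y x2z /andP[/hasP[p pS /andP[_ yp]] yP] /andP[/hasP[q qS /andP[_ zq]] zP].
have [s1 sp1] := end_spanning_path e_sym (canonical_gpath S_can pS) yp.
have [s2 sp2] := end_spanning_path e_sym (canonical_gpath S_can qS) zq.
have pq := outside_targets_same_comp x1y x2z pS qS yP zP sp1 sp2; subst q.
case: (eqVneq y z) => // yz; exfalso.
have [s [sp lz]] := ends_spanning_path e_sym (canonical_gpath S_can pS) yp zq yz.
have zx2 : e (last y s) x2 by rewrite lz e_sym (goes_to_edge x2z).
exact: (no_bridge_through_comp e_sym S_can HP HPdef pS yP sp (goes_to_edge x1y) zx2).
Qed.

Lemma no_outer_end_cycle y z : goes_to e S x1 y -> goes_to e S x2 z ->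
  outer_end y -> in_cycle e S z -> False.
Proof.
move=> x1y x2z /outer_end_spanning_path[K1 [s1 [K1S K1nc yP sp1]]].
move=> /in_cycle_spanning_path[K2 [s2 [K2S K2c zP sp2]]].
by move: K1nc; rewrite (outside_targets_same_comp x1y x2z K1S K2S yP zP sp1 sp2) K2c.
Qed.

Lemma no_cycle_outer_end y z : goes_to e S x1 y -> goes_to e S x2 z ->
  in_cycle e S y -> outer_end z -> False.
Proof.
move=> x1y x2z /in_cycle_spanning_path[K1 [s1 [K1S K1c yP sp1]]].
move=> /outer_end_spanning_path[K2 [s2 [K2S K2nc zP sp2]]].
by move: K2nc; rewrite -(outside_targets_same_comp x1y x2z K1S K2S yP zP sp1 sp2) K1c.
Qed.

Lemma cycle_targets_same_comp y z C D : goes_to e S x1 y -> goes_to e S x2 z ->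
  C \in S -> is_cycle_comp e C -> y \in C -> D \in S -> is_cycle_comp e D -> z \in D ->
  C = D.
Proof.
move=> x1y x2z CS cC yC DS dD zD.
have yP : y \notin P by apply: in_cycle_notin_P; apply/hasP; exists C; rewrite ?cC.
have zP : z \notin P by apply: in_cycle_notin_P; apply/hasP; exists D; rewrite ?dD.
have [s1 sp1] := cycle_spanning_path cC yC; have [s2 sp2] := cycle_spanning_path dD zD.
exact: outside_targets_same_comp x1y x2z CS DS yP zP sp1 sp2.
Qed.

Lemma no_o1_outer_end z : goes_to e S x1 o1 -> goes_to e S x2 z -> outer_end z -> False.
Proof.
move=> x1o1 x2z /outer_end_spanning_path[K [s [KS Knc zP sp]]].
have a2 := goes_to_head_size_a e_irr HP HPpath HPdef x1o1.
have x1a : e x1 (head x1 a) by rewrite -head_P (goes_to_edge x1o1).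
have zx2 : e z x2 by rewrite e_sym (goes_to_edge x2z).
exact: (no_cycle_o1_and_out e_sym S_can HP HPpath HPdef KS Knc zP sp a2 x1a zx2).
Qed.

Lemma no_outer_end_o2 y : goes_to e S x1 y -> outer_end y -> goes_to e S x2 o2 -> False.
Proof.
move=> x1y /outer_end_spanning_path[K [s [KS Knc yP sp]]] x2o2.
have x2o2' : goes_to e S x2 (head x2 (rev P)).
  by rewrite head_rev (_ : last x2 P = o2) // /o2 HPdef !last_cat.
have b2 := goes_to_head_size_a e_irr rev_HP rev_HPpath rev_HPdef x2o2'.
have x2b : e x2 (head x2 (rev b)) by rewrite head_rev -last_P (goes_to_edge x2o2).
have yx1 : e y x1 by rewrite e_sym (goes_to_edge x1y).
have yP' : y \notin rev P by rewrite mem_rev.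
exact: (no_cycle_o1_and_out e_sym S_can rev_HP rev_HPpath rev_HPdef KS Knc yP' sp b2 x2b yx1).
Qed.

Lemma no_o2_outside z : goes_to e S x1 o2 -> goes_to e S x2 z ->
  outer_end z || in_cycle e S z -> False.
Proof.
move=> x1o2 x2z /outside_spanning_path[K [s [KS zP sp]]].
have x1b : e x1 (last x2 b) by rewrite -last_P (goes_to_edge x1o2).
exact: (no_edges_o2_and_out e_sym S_can HP HPdef KS zP sp x1b (goes_to_edge x2z)).
Qed.

Lemma no_outside_o1 y : goes_to e S x1 y -> outer_end y || in_cycle e S y ->
  goes_to e S x2 o1 -> False.
Proof.
move=> x1y /outside_spanning_path[K [s [KS yP sp]]] x2o1.
have x2a : e x2 (last x1 (rev a)) by rewrite last_rev -head_P (goes_to_edge x2o1).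
have yP' : y \notin rev P by rewrite mem_rev.
exact: (no_edges_o2_and_out e_sym S_can rev_HP rev_HPdef KS yP' sp x2a (goes_to_edge x1y)).
Qed.

Lemma no_o2_o1 : goes_to e S x1 o2 -> goes_to e S x2 o1 -> False.
Proof.
move=> x1o2 x2o1.
have x1b : e x1 (last x2 b) by rewrite -last_P (goes_to_edge x1o2).
have x2a : e x2 (head x1 a) by rewrite -head_P (goes_to_edge x2o1).
exact: (no_edges_o2_o1 e_sym S_can HP HPpath HPdef Ha x1b x2a).
Qed.

(* [x1] cannot go to the successor on [C] of a target of [x2]: the arc of [C]
   between them would join [x1] to [x2] through all of [C]. *)
Lemma card_goes_to_comp_le C : C \in S -> is_cycle_comp e C ->
  #|[set y | goes_to e S x1 y && (y \in C)]| +
  #|[set y | goes_to e S x2 y && (y \in C)]| <= size C.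
Proof.
move=> CS cC; have uC := canonical_comp_uniq S_can CS.
have [t [tC ut] next_span] := cycle_next_spanning_path cC uC.
set A := [set y | _]; set B := [set y | _].
have disj : [disjoint A & next t @: B].
  apply/pred0P => y /=; apply/negP => /andP[]; rewrite inE => /andP[x1y _] /imsetP[d].
  rewrite inE => /andP[x2d dC] yd; rewrite {y}yd in x1y.
  have [s [sp ld]] : exists s, spanning_path e C (next t d :: s) /\ last (next t d) s = d.
    by apply: next_span; rewrite (perm_mem tC).
  have nP : next t d \notin P.
    apply: in_cycle_notin_P; apply/hasP; exists C; rewrite // cC.
    by rewrite -(perm_mem tC) mem_next (perm_mem tC).
  have dx2 : e (last (next t d) s) x2 by rewrite ld e_sym (goes_to_edge x2d).
  exact: (no_bridge_through_comp e_sym S_can HP HPdef CS nP sp (goes_to_edge x1y) dx2).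
have sub : A :|: next t @: B \subset [set y | y \in C].
  apply/subsetP => y; rewrite !inE => /orP[/andP[_ ->] // | /imsetP[d]].
  by rewrite inE => /andP[_ dC] ->; rewrite -(perm_mem tC) mem_next (perm_mem tC).
have -> : #|B| = #|next t @: B| by rewrite card_imset //; apply: can_inj (prev_next ut).
rewrite -cardsUI (disjoint_setI0 disj) cards0 addn0.
by apply: leq_trans (subset_leq_card sub) _; rewrite cardsE (card_uniqP uC).
Qed.

Lemma card_goes_to_x1_le4 : #|[set y | goes_to e S x1 y]| <= 4.
Proof. by rewrite -[4]/(6 - 2) -(e_reg x1) (card_goes_to_x1_le e_sym S_can HP HPpath HPdef). Qed.

Lemma card_goes_to_x2_le4 : #|[set y | goes_to e S x2 y]| <= 4.
Proof.
have rbn : rev b != [::] by rewrite -size_eq0 size_rev size_eq0.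
rewrite -[4]/(6 - 2) -(e_reg x2).
exact: (card_goes_to_x1_le e_sym S_can rev_HP rev_HPpath rev_HPdef rbn).
Qed.

Local Open Scope ring_scope.

Lemma bsum_le_outer_end y0 : goes_to e S x1 y0 -> outer_end y0 ->
  bsum e S x1 + bsum e S x2 <= 4 / 3.
Proof.
move=> x1y0 y0out.
have x2_y0 z : goes_to e S x2 z -> z = y0.
  move=> x2z; case: (balanced_target_cases x2z) => [eo|eo|zout|zc].
  - by rewrite eo in x2z; case: (no_outside_o1 x1y0 _ x2z); rewrite y0out.
  - by rewrite eo in x2z; case: (no_outer_end_o2 x1y0 y0out x2z).
  - by rewrite (outer_ends_eq x1y0 x2z y0out zout).
  - by case: (no_outer_end_cycle x1y0 x2z y0out zc).
have [z0 x2z0] := V2_goes_to Hx2; have x2y0 := x2z0; rewrite (x2_y0 _ x2z0) in x2y0.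
have x1_y0 y : goes_to e S x1 y -> y = y0.
  move=> x1y; case: (balanced_target_cases x1y) => [eo|eo|yout|yc].
  - by rewrite eo in x1y; case: (no_o1_outer_end x1y x2y0 y0out).
  - by rewrite eo in x1y; case: (no_o2_outside x1y x2y0); rewrite y0out.
  - by rewrite (outer_ends_eq x1y x2y0 yout y0out).
  - by case: (no_cycle_outer_end x1y x2y0 yc y0out).
by have := bsum_le_single S_can x1_y0; have := bsum_le_single S_can x2_y0; lra.
Qed.

Lemma bsum_le_x1_o2 : goes_to e S x1 o2 ->
  ~~ (goes_to e S x1 o1 && goes_to e S x2 o2) -> bsum e S x1 + bsum e S x2 <= 7 / 3.
Proof.
move=> x1o2 not_own.
have x2_o2 z : goes_to e S x2 z -> z = o2.
  move=> x2z; case: (balanced_target_cases x2z) => [eo|//|zout|zc].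
  - by rewrite eo in x2z; case: (no_o2_o1 x1o2 x2z).
  - by case: (no_o2_outside x1o2 x2z); rewrite zout.
  - by case: (no_o2_outside x1o2 x2z); rewrite zc orbT.
have [z0 x2z0] := V2_goes_to Hx2; have x2o2 := x2z0; rewrite (x2_o2 _ x2z0) in x2o2.
have x1_o2 y : goes_to e S x1 y -> y = o2 \/ in_cycle e S y.
  move=> x1y; case: (balanced_target_cases x1y) => [eo|->|yout|]; [|by left| |by right].
  - by move: not_own; rewrite -eo x1y x2o2.
  - by case: (no_outer_end_o2 x1y yout x2o2).
have := bsum_le_end_cycles S_can card_goes_to_x1_le4 x1_o2.
by have := bsum_le_single S_can x2_o2; lra.
Qed.

Lemma bsum_le_no_cross :
  (forall y, goes_to e S x1 y -> ~~ outer_end y) ->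
  (forall z, goes_to e S x2 z -> ~~ outer_end z) ->
  ~~ goes_to e S x1 o2 -> ~~ goes_to e S x2 o1 ->
  ~~ (goes_to e S x1 o1 && goes_to e S x2 o2) -> bsum e S x1 + bsum e S x2 <= 7 / 3.
Proof.
move=> x1Nout x2Nout x1No2 x2No1 not_own.
have x1_o1 y : goes_to e S x1 y -> y = o1 \/ in_cycle e S y.
  move=> x1y; case: (balanced_target_cases x1y) => [|eo|yout|]; [by left| | |by right].
  - by move: x1No2; rewrite -eo x1y.
  - by move: (x1Nout _ x1y); rewrite yout.
have x2_o2 z : goes_to e S x2 z -> z = o2 \/ in_cycle e S z.
  move=> x2z; case: (balanced_target_cases x2z) => [eo| |zout|]; [|by left| |by right].
  - by move: x2No1; rewrite -eo x2z.
  - by move: (x2Nout _ x2z); rewrite zout.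
have [y0 /andP[x1y0 y0c]|x1Nc] :=
  pickP (fun y => goes_to e S x1 y && in_cycle e S y); last first.
  have x1_o1' y : goes_to e S x1 y -> y = o1.
    by move=> x1y; case: (x1_o1 _ x1y) => // yc; move: (x1Nc y); rewrite x1y yc.
  have := bsum_le_single S_can x1_o1'.
  by have := bsum_le_end_cycles S_can card_goes_to_x2_le4 x2_o2; lra.
have [z0 /andP[x2z0 z0c]|x2Nc] :=
  pickP (fun z => goes_to e S x2 z && in_cycle e S z); last first.
  have x2_o2' z : goes_to e S x2 z -> z = o2.
    by move=> x2z; case: (x2_o2 _ x2z) => // zc; move: (x2Nc z); rewrite x2z zc.
  have := bsum_le_single S_can x2_o2'.
  by have := bsum_le_end_cycles S_can card_goes_to_x1_le4 x1_o1; lra.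
case/hasP: z0c => D DS /andP[dD z0D].
have x1_D y : goes_to e S x1 y -> y = o1 \/ y \in D.
  move=> x1y; case: (x1_o1 _ x1y) => [|/hasP[C CS /andP[cC yC]]]; [by left|right].
  by rewrite -(cycle_targets_same_comp x1y x2z0 CS cC yC DS dD z0D).
have x2_D z : goes_to e S x2 z -> z = o2 \/ z \in D.
  move=> x2z; case: (x2_o2 _ x2z) => [|/hasP[C CS /andP[cC zC]]]; [by left|right].
  case/hasP: y0c => C0 C0S /andP[c0C y0C0].
  rewrite -(cycle_targets_same_comp x1y0 x2z0 C0S c0C y0C0 DS dD z0D).
  by rewrite (cycle_targets_same_comp x1y0 x2z C0S c0C y0C0 CS cC zC).
have := bsum_pair_le_comp S_can DS dD x1_D x2_D not_own (card_goes_to_comp_le DS dD).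
lra.
Qed.

End Targets.

Section Bound.
Variables (T : finType) (e : rel T).
Hypotheses (e_sym : symmetric e) (e_irr : irreflexive e).
Hypothesis e_reg : forall v, #|[set w | e v w]| = 6.
Variable S : seq (seq T).
Hypothesis S_can : canonical_pp e S.
Variables (P a b : seq T) (x1 x2 : T).
Hypothesis HP : (P \in S) || (rev P \in S).
Hypothesis HPpath : is_path_comp e P.
Hypothesis HPdef : P = a ++ x1 :: x2 :: b.
Hypotheses (Hx1 : V2 e S x1) (Hx2 : V2 e S x2).

Lemma V2_pair_interior : a != [::] /\ b != [::].
Proof.
have V2N y : V2 e S y -> (y == head y P) || (y == last y P) -> False.
  by move=> /andP[/negP yN1 _] /(end_vertex_ends_P HP HPpath) yend; apply: yN1; rewrite /V1 yend.
split; apply/eqP => ab0.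
  by apply: (V2N _ Hx1); rewrite HPdef ab0 eqxx.
by apply: (V2N _ Hx2); rewrite HPdef ab0 last_cat eqxx orbT.
Qed.

Local Open Scope ring_scope.

Lemma bsum_le_unless_own_ends :
  ~~ (goes_to e S x1 (head x1 P) && goes_to e S x2 (last x1 P)) ->
  bsum e S x1 + bsum e S x2 <= 7 / 3.
Proof.
move=> not_own; have [Ha Hb] := V2_pair_interior.
have rHa : rev b != [::] by rewrite -size_eq0 size_rev size_eq0.
have [hr lr] : head x2 (rev P) = last x1 P /\ last x2 (rev P) = head x1 P.
  by rewrite head_rev last_rev HPdef !last_cat; case: (a).
pose rHP := rev_P_comp HP; pose rHPpath := rev_P_path_comp HPpath; pose rHPdef := rev_P_split HPdef.
have [y0 /andP[x1y0 y0out]|x1Nout] := pickP (fun y => goes_to e S x1 y && outer_end e S P y).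
  by have := bsum_le_outer_end e_sym e_irr S_can HP HPpath HPdef Ha Hx2 x1y0 y0out; lra.
have [z0 /andP[x2z0 z0out]|x2Nout] := pickP (fun z => goes_to e S x2 z && outer_end e S P z).
  have z0out' : outer_end e S (rev P) z0 by rewrite /outer_end mem_rev.
  by have := bsum_le_outer_end e_sym e_irr S_can rHP rHPpath rHPdef rHa Hx1 x2z0 z0out'; lra.
case x1o2: (goes_to e S x1 (last x1 P)).
  exact: (bsum_le_x1_o2 e_sym e_irr S_can HP HPpath HPdef Ha Hx2 e_reg x1o2 not_own).
case x2o1: (goes_to e S x2 (head x1 P)).
  have not_own' : ~~ (goes_to e S x2 (head x2 (rev P)) && goes_to e S x1 (last x2 (rev P))).
    by rewrite hr lr andbC.
  have x2o1' : goes_to e S x2 (last x2 (rev P)) by rewrite lr.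
  have := bsum_le_x1_o2 e_sym e_irr S_can rHP rHPpath rHPdef rHa Hx1 e_reg x2o1' not_own'.
  by rewrite addrC.
apply: (bsum_le_no_cross e_sym S_can HP HPpath HPdef Ha Hb e_reg); rewrite ?x1o2 ?x2o1 //.
  by move=> y x1y; apply/negP => yout; move: (x1Nout y); rewrite /= x1y yout.
by move=> z x2z; apply/negP => zout; move: (x2Nout z); rewrite /= x2z zout.
Qed.

End Bound.

Unset Implicit Arguments. Set Strict Implicit.

Theorem mainTheorem13 (T : finType) (e : rel T)
  (e_sym : symmetric e) (e_irr : irreflexive e)
  (e_reg : forall v : T, #|[set w | e v w]| = 6%N)
  (S : seq (seq T)) (S_can : canonical_pp e S)
  (P a b : seq T) (o1 o2 x1 x2 : T)
  (HP : (P \in S) || (rev P \in S)) (HPpath : is_path_comp e P)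
  (HPdef : P = a ++ x1 :: x2 :: b)
  (Ho1 : o1 = head x1 P) (Ho2 : o2 = last x1 P)
  (Hx1 : V2 e S x1) (Hx2 : V2 e S x2)
  (Hnd1 : forall d, dangerous e S d -> ~~ free_edge e S x1 d)
  (Hnd2 : forall d, dangerous e S d -> ~~ free_edge e S x2 d)
  (Hb : (7 / 3 < bval e S [set x1] + bval e S [set x2])%R) :
  goes_to e S x1 o1 /\ goes_to e S x2 o2.
Proof.
subst o1 o2; apply/andP; apply: contraLR Hb => not_own.
rewrite -leNgt !bval_set1.
exact: (bsum_le_unless_own_ends e_sym e_irr e_reg S_can HP HPpath HPdef Hx1 Hx2 not_own).
Qed.
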